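(* Let $G$ be a totally disconnected, locally compact group and $\mathcal{H}$ a group of automorphisms of $G$. Then the set $\mathcal{H}_{FC_d}:=\{\varphi\in\mathcal{H}:\varphi^{\mathcal{H}}\text{ is bounded}\}$ is a normal subgroup of $\mathcal{H}$, and for any such $\mathcal{H}$ we have $(\mathcal{H}_{FC_d})_{FC_d}=\mathcal{H}_{FC_d}$.
   Context: Automorphisms are continuous with continuous inverse. $\mathcal{B}(G)$ is the set of compact, open subgroups of $G$ with metric $d(V,W)=\log\bigl(|V:V\cap W|\cdot|W:W\cap V|\bigr)$. A set $B$ of automorphisms of $G$ is bounded if $B.V=\{\beta(V):\beta\in B\}$ has bounded diameter in $\mathcal{B}(G)$ for some (equivalently every) $V\in\mathcal{B}(G)$. For a group $\mathcal{K}$ of automorphisms and $\varphi\in\mathcal{K}$, $\varphi^{\mathcal{K}}=\{\psi\varphi\psi^{-1}:\psi\in\mathcal{K}\}$, and $\mathcal{K}_{FC_d}=\{\varphi\in\mathcal{K}:\varphi^{\mathcal{K}}\text{ bounded}\}$; in particular $(\mathcal{H}_{FC_d})_{FC_d}$ uses conjugation by elements of $\mathcal{H}_{FC_d}$ only. *)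

From HB Require Import structures.

From mathcomp Require Import all_boot all_order.
From mathcomp Require Import finmap boolp classical_sets functions cardinality topology.
From Stdlib Require Rdefinitions Raxioms Rpower.

Set Implicit Arguments. Unset Strict Implicit. Unset Printing Implicit Defensive.
Local Open Scope classical_set_scope.


Section TDLC.
Variable G : topologicalType.
Variables (mul : G -> G -> G) (inv : G -> G) (one : G).

(* G is a (Hausdorff-free formulation of a) topological group *)
Definition is_topological_group : Prop :=
  [/\ (forall x y z, mul x (mul y z) = mul (mul x y) z),
      (forall x, mul one x = x /\ mul x one = x),
      (forall x, mul (inv x) x = one /\ mul x (inv x) = one),
      continuous (fun p : G * G => mul p.1 p.2) &
      continuous inv].

Definition is_tdlc_group : Prop :=
  [/\ is_topological_group,
      totally_disconnected [set: G] &
      locally_compact [set: G]].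

Definition is_subgroup (V : set G) : Prop :=
  [/\ V one, (forall x y, V x -> V y -> V (mul x y)) & (forall x, V x -> V (inv x))].

Definition compact_open_subgroup (V : set G) : Prop :=
  [/\ is_subgroup V, compact V & open V].

Definition lcoset (x : G) (H : set G) : set G := [set mul x h | h in H].

(* index |V : H| = number of left cosets x H, x in V (finite for the uses below) *)
Definition index (V H : set G) : nat := (#|` fset_set [set lcoset x H | x in V] |)%fset.

Definition dist (V W : set G) : Rdefinitions.R :=
  Rpower.ln (Raxioms.INR (index V (V `&` W) * index W (W `&` V))).

Definition inverse_fun (f g : G -> G) : Prop := (forall x, g (f x) = x) /\ (forall x, f (g x) = x).

Definition is_automorphism (f : G -> G) : Prop :=
  [/\ (forall x y, f (mul x y) = mul (f x) (f y)),
      continuous f &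
      exists g, inverse_fun f g /\ continuous g].

Definition automorphism_group (K : set (G -> G)) : Prop :=
  [/\ (forall f, K f -> is_automorphism f),
      K id,
      (forall f g, K f -> K g -> K (f \o g)) &
      (forall f, K f -> exists2 g, K g & inverse_fun f g)].

Definition bounded_set (B : set (G -> G)) : Prop :=
  exists V, compact_open_subgroup V /\
    exists M : Rdefinitions.R, forall b c, B b -> B c -> Rdefinitions.Rle (dist (b @` V) (c @` V)) M.

Definition conj_class (K : set (G -> G)) (phi : G -> G) : set (G -> G) :=
  [set f | exists psi psi', [/\ K psi, inverse_fun psi psi' & f = psi \o phi \o psi']].

Definition FCd (K : set (G -> G)) : set (G -> G) :=
  [set phi | K phi /\ bounded_set (conj_class K phi)].

Definition normal_subgroup (N K : set (G -> G)) : Prop :=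
  [/\ N `<=` K, N id,
      (forall f g, N f -> N g -> N (f \o g)),
      (forall f g, N f -> inverse_fun f g -> N g) &
      (forall psi psi' f, K psi -> inverse_fun psi psi' -> N f -> N (psi \o f \o psi'))].

End TDLC.

From Pilot Require Import Defs.
From mathcomp Require Import all_boot boolp classical_sets topology.
From mathcomp Require Import finmap cardinality.
From Stdlib Require Import Rpower RIneq Lra.

Set Implicit Arguments. Unset Strict Implicit. Unset Printing Implicit Defensive.
Local Open Scope classical_set_scope.

(* By van Dantzig's theorem [G] has a compact open subgroup [V], and a set of
   automorphisms is bounded iff it moves [V] only a bounded distance.  Since
   automorphisms do not increase [d], a conjugate
   [psi (f g) psi^-1 = (psi f psi^-1) (psi g psi^-1)] moves [V] at most as far
   as the two factors together, and a conjugate of [f^-1] at most as far as the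
   corresponding conjugate of [f]; conjugating by an element of [H], or
   conjugating by fewer automorphisms, only shrinks conjugacy classes. *)

Section Separation.
Context {T : topologicalType}.

(* Otherwise the traces on [K] of the closures of the members of [S] form a
   proper filter base, and its cluster point in [K] contradicts the hypothesis. *)
Lemma compact_filter_closure_disjoint (K : set T) (S : set_system T) :
  Filter S -> compact K ->
  (forall y, K y -> exists O N, [/\ open O, O y, S N & O `&` N = set0]) ->
  exists2 N, S N & K `&` closure N = set0.
Proof.
move=> FS cK sep; apply: contrapT => noN.
have meetK N : S N -> (K `&` closure N) !=set0.
  by move=> SN; apply/set0P/eqP => KN0; apply: noN; exists N.
pose F := filter_from S (fun N => K `&` closure N).
have FF : Filter F.
  apply: filter_from_filter; first by exists setT; exact: filterT.
  move=> M N SM SN; exists (M `&` N); first exact: filterI.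
  by move=> x [Kx /closureI[]].
have PF : ProperFilter F by exact: filter_from_proper meetK.
have FK : F K by exists setT; [exact: filterT | move=> x []].
have [y [Ky clFy]] := cK F PF FK.
have [O [N [oO Oy SN /disjoints_subset ON]]] := sep y Ky.
have FN : F (K `&` closure N) by exists N.
have [w [[_ clNw] Ow]] := clFy _ O FN (open_nbhs_nbhs (conj oO Oy)).
have [v [Nv Ov]] := clNw O (open_nbhs_nbhs (conj oO Ow)).
exact: ON v Ov Nv.
Qed.

Lemma compact_finite_subcover (A : set T) (f : T -> set T) :
  compact A -> (forall x, A x -> nbhs x (f x)) -> finite_subset_cover A f A.
Proof.
move/compact_near_coveringP => cov nf.
pose F := filter_from [set: {fset T}] (fun X => [set D : {fset T} | (X `<=` D)%fset]).
have FF : Filter F.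
  apply: filter_from_filter; first by exists fset0.
  move=> X Y _ _; exists (X `|` Y)%fset => // D /= XYD; split.
    exact: fsubset_trans (fsubsetUl _ _) XYD.
  exact: fsubset_trans (fsubsetUr _ _) XYD.
have [x Ax|X _ XA] := cov {fset T} F (fun D x => exists2 d, d \in D & A d /\ f d x) FF.
  exists (f x, [set D : {fset T} | x \in D]).
    by split; [exact: nf | exists [fset x]%fset => // D /=; rewrite fsub1set].
  by case=> y D /= [fy xD]; exists x.
exists [fset d in X | d \in A]%fset => [d|x Ax].
  by rewrite !inE => /andP[].
have [d dX [Ad fdx]] := XA X (fsubset_refl X) x Ax.
by exists d => //=; rewrite !inE dX /= in_setE.
Qed.

Hypothesis hT : hausdorff_space T.

Lemma compact_point_separation (K : set T) x :
  compact K -> ~ K x -> exists2 N, nbhs x N & K `&` closure N = set0.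
Proof.
move=> cK nKx; apply: compact_filter_closure_disjoint => // y Ky.
have xy : x != y by apply/eqP => exy; rewrite exy in nKx.
move: hT; rewrite open_hausdorff => /(_ _ _ xy) [[A B]] /= [xA yB] [oA oB AB0].
rewrite in_setE in xA; rewrite in_setE in yB.
exists B, A; split => //; first exact: open_nbhs_nbhs.
by rewrite setIC; apply/eqP.
Qed.

Lemma compact_separation (A1 A2 : set T) :
  compact A1 -> compact A2 -> A1 `&` A2 = set0 ->
  exists U1 U2, [/\ open U1, open U2, A1 `<=` U1, A2 `<=` U2 & U1 `&` U2 = set0].
Proof.
move=> cA1 cA2 /disjoints_subset A12.
have [N nA1N /disjoints_subset A2N] : exists2 N, set_nbhs A1 N & A2 `&` closure N = set0.
  apply: compact_filter_closure_disjoint => // y A2y.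
  have [M nyM /disjoints_subset A1M] := compact_point_separation cA1 (fun A1y => A12 y A1y A2y).
  exists M°, (~` closure M); split.
  - exact: open_interior.
  - exact: nbhs_singleton (nbhs_interior nyM).
  - apply/set_nbhsP; exists (~` closure M); split => //.
    exact: closed_openC (@closed_closure _ _).
  - by apply/disjoints_subset => z /interior_subset Mz; apply; exact: subset_closure.
case/set_nbhsP: nA1N => C [oC A1C CN].
exists C, (~` closure N); split => //; first exact: closed_openC (@closed_closure _ _).
by apply/disjoints_subset => z Cz; apply; apply: subset_closure; exact: CN.
Qed.

End Separation.

Section TopologicalGroup.
Variable G : topologicalType.
Variables (mul : G -> G -> G) (inv : G -> G) (one : G).
Hypothesis TG : is_topological_group mul inv one.

Lemma mulA x y z : mul x (mul y z) = mul (mul x y) z.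
Proof. by case: TG. Qed.
Lemma mul1g x : mul one x = x.
Proof. by case: TG => _ h _ _ _; case: (h x). Qed.
Lemma mulg1 x : mul x one = x.
Proof. by case: TG => _ h _ _ _; case: (h x). Qed.
Lemma mulVg x : mul (inv x) x = one.
Proof. by case: TG => _ _ h _ _; case: (h x). Qed.
Lemma mulgV x : mul x (inv x) = one.
Proof. by case: TG => _ _ h _ _; case: (h x). Qed.
Lemma mulKg x y : mul (inv x) (mul x y) = y.
Proof. by rewrite mulA mulVg mul1g. Qed.
Lemma mulVKg x y : mul x (mul (inv x) y) = y.
Proof. by rewrite mulA mulgV mul1g. Qed.
Lemma invK x : inv (inv x) = x.
Proof. by rewrite -[LHS]mulg1 -(mulVg x) mulA mulVg mul1g. Qed.
Lemma inv1 : inv one = one.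
Proof. by rewrite -[inv one]mul1g mulgV. Qed.
Lemma invM x y : inv (mul x y) = mul (inv y) (inv x).
Proof.
have e : mul (mul x y) (mul (inv y) (inv x)) = one.
  by rewrite -mulA (mulA y) mulgV mul1g mulgV.
by rewrite -(mulKg (mul x y) (mul (inv y) (inv x))) e mulg1.
Qed.

Lemma mul_near a b (S : set G) : nbhs (mul a b) S ->
  exists P Q, [/\ nbhs a P, nbhs b Q & forall x y, P x -> Q y -> S (mul x y)].
Proof.
case: TG => _ _ _ mulC _ /(mulC (a, b))[[P Q] /= [nP nQ] PQS].
by exists P, Q; split => // x y Px Qy; exact: (PQS (x, y)).
Qed.

Lemma inv_near a (S : set G) : nbhs (inv a) S -> nbhs a [set x | S (inv x)].
Proof. by case: TG => _ _ _ _ invC /(invC a). Qed.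

Lemma lmul_near t a (S : set G) : nbhs (mul t a) S -> nbhs a [set x | S (mul t x)].
Proof.
case/mul_near => P [Q [nP nQ PQS]]; apply: filterS nQ => y Qy.
exact: PQS (nbhs_singleton nP) Qy.
Qed.

(* If [p] and [q] cannot be separated, [inv p * q] lies in the closure of
   [one], which is connected. *)
Lemma totally_disconnected_group_hausdorff :
  totally_disconnected [set: G] -> hausdorff_space G.
Proof.
move=> TD p q clpq.
have cl1 : closure [set one] (mul (inv p) q).
  move=> B /mul_near[P [Q [nP nQ PQB]]].
  have [y [Py Qy]] := clpq _ _ (inv_near nP) nQ.
  by exists one; split => //; have := PQB _ _ Py Qy; rewrite mulVg.
have : connected_component [set: G] one (mul (inv p) q).
  apply: (connected_component_max _ (@subsetT _ _)) cl1.
    exact: subset_closure.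
  exact/connected_closure/connected1.
by rewrite TD // => /= e; rewrite -(mulVKg p q) e mulg1.
Qed.

End TopologicalGroup.

Section QuasiComponent.
Context {T : topologicalType}.
Hypothesis hT : hausdorff_space T.
Variables (K : set T) (p : T).
Hypotheses (cK : compact K) (Kp : K p).

Let clK : closed K := compact_closed hT cK.

(* Relatively clopen subsets of [K] containing [p]; their intersection is the
   quasi-component of [p] in [K]. *)
Definition relclopen (D : set T) := [/\ D `<=` K, closed D, closed (K `\` D) & D p].

Lemma relclopenT : relclopen K.
Proof. by split => //; rewrite setDv; exact: closed0. Qed.

Lemma relclopenI D1 D2 : relclopen D1 -> relclopen D2 -> relclopen (D1 `&` D2).
Proof.
case=> sD1 cD1 cKD1 D1p [sD2 cD2 cKD2 D2p]; split => //.
- by move=> x [/sD1].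
- exact: closedI.
- by rewrite setDIr; exact: closedU.
Qed.

Lemma relclopen_avoid (S : set T) : closed S -> S `<=` K ->
  (forall x, S x -> exists D, relclopen D /\ ~ D x) ->
  exists D, relclopen D /\ S `&` D = set0.
Proof.
move=> clS SK avoid; apply: contrapT => noD.
have meetS D : relclopen D -> (S `&` D) !=set0.
  by move=> rD; apply/set0P/eqP => SD0; apply: noD; exists D.
pose F := filter_from relclopen (fun D => S `&` D).
have FF : Filter F.
  apply: filter_from_filter; first by exists K; exact: relclopenT.
  move=> D1 D2 rD1 rD2; exists (D1 `&` D2); first exact: relclopenI.
  by move=> x [Sx [D1x D2x]].
have PF : ProperFilter F by exact: filter_from_proper meetS.
have FS : F S by exists K; [exact: relclopenT | move=> x []].
have [y [Sy clFy]] := subclosed_compact clS cK SK PF FS.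
have [D [rD nDy]] := avoid y Sy.
have FD : F (S `&` D) by exists D.
have [_ cD _ _] := rD.
have [w [[_ Dw] nDw]] := clFy _ _ FD (open_nbhs_nbhs (conj (closed_openC cD) nDy)).
exact: nDw.
Qed.

Definition quasi_component := [set x | forall D, relclopen D -> D x].

Lemma quasi_component_closed : closed quasi_component.
Proof.
move=> x clx D rD; case: (rD) => _ cD _ _; apply: cD.
by apply: closureS clx => y; apply.
Qed.

Lemma quasi_component_sub : quasi_component `<=` K.
Proof. by move=> x; apply; exact: relclopenT. Qed.

Lemma quasi_component_refl : quasi_component p.
Proof. by move=> D []. Qed.

Lemma quasi_component_compact A : closed A -> A `<=` quasi_component -> compact A.
Proof. by move=> clA AQ; apply: subclosed_compact clA cK _ => x /AQ /quasi_component_sub. Qed.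

(* A clopen splitting of the quasi-component extends, by compactness, to a
   relatively clopen subset of [K] containing [p] and missing one piece. *)
Lemma quasi_component_split (A1 A2 : set T) : closed A1 -> closed A2 ->
  quasi_component = A1 `|` A2 -> A1 `&` A2 = set0 -> A1 p -> A2 = set0.
Proof.
move=> clA1 clA2 QA A12 A1p.
have [A1Q A2Q] : A1 `<=` quasi_component /\ A2 `<=` quasi_component.
  by rewrite QA; split => x; [left | right].
have [U1 [U2 [oU1 oU2 A1U1 A2U2 /disjoints_subset U12]]] :=
  compact_separation hT (quasi_component_compact clA1 A1Q)
    (quasi_component_compact clA2 A2Q) A12.
pose S := K `&` ~` U1 `&` ~` U2.
have [D [[DK clD clKD Dp] /disjoints_subset SD]] : exists D, relclopen D /\ S `&` D = set0.
  apply: relclopen_avoid => [||x [[Kx nU1x] nU2x]].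
  - by apply: closedI; [apply: closedI => //|]; exact: open_closedC.
  - by move=> x [[]].
  have : ~ quasi_component x by rewrite QA => -[/A1U1|/A2U2].
  by move/existsNP => [D /not_implyP]; exists D.
have DU : D `<=` U1 `|` U2.
  move=> x Dx; apply: contrapT => /not_orP[nU1x nU2x].
  exact: SD x (conj (conj (DK x Dx) nU1x) nU2x) Dx.
have rDU1 : relclopen (D `&` U1).
  split; [by move=> x [/DK] | | | by split => //; exact: A1U1].
  - have -> : D `&` U1 = D `&` ~` U2.
      apply/seteqP; split=> x [Dx Ux]; split => //; first exact: U12.
      by case: (DU x Dx).
    by apply: closedI => //; exact: open_closedC.
  - by rewrite setDIr; apply: closedU => //; apply: closedI => //; exact: open_closedC.
rewrite -subset0 => x A2x.
have [_ U1x] := A2Q x A2x _ rDU1.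
exact: U12 x U1x (A2U2 x A2x).
Qed.

Lemma quasi_component_connected : connected quasi_component.
Proof.
move=> B [b Bb] [O oO BO] [C clC BC].
set Q := quasi_component in BO BC *.
have clQ : closed Q := quasi_component_closed.
have QCO : Q = (Q `&` C) `|` (Q `&` ~` O).
  apply/seteqP; split => [x Qx|x [[]|[]] //].
  by have [Ox|nOx] := pselect (O x); [left; rewrite -BC BO | right].
have CO : (Q `&` C) `&` (Q `&` ~` O) = set0.
  by apply/disjoints_subset => x; rewrite -BC BO => -[_ Ox] [].
have clQC : closed (Q `&` C) by exact: closedI.
have clQO : closed (Q `&` ~` O) by apply: closedI => //; exact: open_closedC.
have [Bp|nBp] := pselect (B p).
  have QCp : (Q `&` C) p by rewrite -BC.
  have /disjoints_subset nO := quasi_component_split clQC clQO QCO CO QCp.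
  apply/seteqP; split => [x|x Qx]; first by rewrite BO => -[].
  by rewrite BO; split => //; apply: contrapT; exact: nO x Qx.
have Op : (Q `&` ~` O) p.
  split => [|Op]; first exact: quasi_component_refl.
  by apply: nBp; rewrite BO; split => //; exact: quasi_component_refl.
have B0 : Q `&` C = set0.
  by apply: quasi_component_split clQO clQC _ _ Op; [rewrite setUC | rewrite setIC].
by move: Bb; rewrite BC B0.
Qed.

Hypothesis TD : totally_disconnected [set: T].

Lemma quasi_component_set1 : quasi_component = [set p].
Proof.
apply/seteqP; split => [x Qx|_ ->]; last exact: quasi_component_refl.
have := connected_component_max quasi_component_refl (@subsetT _ _)
  quasi_component_connected Qx.
by rewrite TD.
Qed.

Lemma compact_open_nbhs : nbhs p K -> exists C, [/\ compact C, open C & C p].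
Proof.
move=> nK; pose V := K°.
have [D [[DK clD clKD Dp] /disjoints_subset SD]] :
    exists D, relclopen D /\ (K `&` ~` V) `&` D = set0.
  apply: relclopen_avoid => [||x [Kx nVx]].
  - by apply: closedI => //; apply: open_closedC; exact: open_interior.
  - by move=> x [].
  have : ~ quasi_component x.
    rewrite quasi_component_set1 => xp; apply: nVx; rewrite xp.
    exact: nbhs_singleton (nbhs_interior nK).
  by move/existsNP => [D /not_implyP]; exists D.
exists D; split => //; first exact: subclosed_compact clD cK DK.
have -> : D = V `&` ~` (K `\` D).
  apply/seteqP; split => x.
    move=> Dx; split; last by move=> [].
    by apply: contrapT => nVx; exact: SD x (conj (DK x Dx) nVx) Dx.
  by move=> [Vx nKDx]; apply: contrapT => nDx; apply: nKDx; split => //; exact: interior_subset.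
by apply: openI; [exact: open_interior | exact: closed_openC].
Qed.

End QuasiComponent.

Section VanDantzig.
Variable G : topologicalType.
Variables (mul : G -> G -> G) (inv : G -> G) (one : G).
Hypothesis TG : is_topological_group mul inv one.

Lemma nbhs1_translate (U : set G) x : nbhs one U ->
  nbhs x [set y | U (mul (inv x) y)].
Proof. by move=> nU; apply: (lmul_near TG); rewrite (mulVg TG). Qed.

Lemma nbhs1_subgroup_open (U : set G) : is_subgroup mul inv one U -> nbhs one U -> open U.
Proof.
case=> _ UM _ nU; rewrite openE => t Ut.
apply: filterS (nbhs1_translate t nU) => y Uy.
by rewrite -(mulVKg TG t y); exact: UM.
Qed.

Lemma open_subgroup_closed (U : set G) : is_subgroup mul inv one U -> open U -> closed U.
Proof.
case=> U1 UM UV oU x clx.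
have nU : nbhs one U by exact: open_nbhs_nbhs.
have [y [Uy Uxy]] := clx _ (nbhs1_translate x nU).
have Ux' : U (inv x).
  by have := UM _ _ Uxy (UV _ Uy); rewrite -(mulA TG) (mulgV TG) (mulg1 TG).
by rewrite -(invK TG x); exact: UV.
Qed.

(* Van Dantzig: the elements [x] with [C x ⊆ C] and [C x^-1 ⊆ C] form an
   open subgroup inside a compact open neighbourhood [C] of [one]. *)
Lemma compact_open_subgroup_exists : totally_disconnected [set: G] ->
  locally_compact [set: G] -> exists V, compact_open_subgroup mul inv one V.
Proof.
move=> TD LC; have hG := totally_disconnected_group_hausdorff TG TD.
have [K nK cK] : exists2 K, nbhs one K & compact K.
  by have [K nK [cK _]] := LC one I; rewrite withinET in nK; exists K.
have [C [cC oC C1]] := compact_open_nbhs hG cK (nbhs_singleton nK) TD nK.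
pose S := [set x | forall c, C c -> C (mul c x)].
have nS : nbhs one S.
  move/compact_near_coveringP: cC => cov.
  apply: (cov G (nbhs one) (fun w c => C (mul c w))) => c Cc.
  have nC : nbhs (mul c one) C by rewrite (mulg1 TG); exact: open_nbhs_nbhs.
  have [P [Q [nP nQ PQC]]] := mul_near TG nC.
  by exists (P, Q) => // -[a b] [Pa Qb]; exact: PQC.
pose V := [set x | S x /\ S (inv x)].
have sV : is_subgroup mul inv one V.
  split.
  - by split => c Cc; rewrite ?(inv1 TG) (mulg1 TG).
  - move=> x y [Sx Sx'] [Sy Sy']; split => c Cc.
      by rewrite (mulA TG); apply: Sy; apply: Sx.
    by rewrite (invM TG) (mulA TG); apply: Sx'; apply: Sy'.
  - by move=> x [Sx Sx']; split => //; rewrite (invK TG).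
have nV : nbhs one V.
  have nSV : nbhs one [set x | S (inv x)] by apply: (inv_near TG); rewrite (inv1 TG).
  by apply: filterS (filterI nS nSV) => x [].
have oV := nbhs1_subgroup_open sV nV.
have VC : V `<=` C by move=> x [Sx _]; rewrite -(mul1g TG x); exact: Sx.
exists V; split => //.
exact: subclosed_compact (open_subgroup_closed sV oV) cC VC.
Qed.

End VanDantzig.

Section CosetIndex.
Variable G : topologicalType.
Variables (mul : G -> G -> G) (inv : G -> G) (one : G).
Hypothesis TG : is_topological_group mul inv one.

Local Notation subgroup := (is_subgroup mul inv one).
Local Notation cos := (compact_open_subgroup mul inv one).
Local Notation lcoset := (lcoset mul).
Local Notation index := (Defs.index mul).

Lemma subgroupI (U W : set G) : subgroup U -> subgroup W -> subgroup (U `&` W).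
Proof.
case=> U1 UM UV [W1 WM WV]; split => //.
- by move=> x y [Ux Wx] [Uy Wy]; split; [exact: UM | exact: WM].
- by move=> x [Ux Wx]; split; [exact: UV | exact: WV].
Qed.

Lemma lcoset_refl (H : set G) x : H one -> lcoset x H x.
Proof. by move=> H1; exists one => //; rewrite (mulg1 TG). Qed.

Lemma lcoset_eq (H : set G) x y : subgroup H -> lcoset x H y -> lcoset y H = lcoset x H.
Proof.
move=> [H1 HM HV] [h Hh <-]; apply/seteqP; split => z [h' Hh' <-].
- by exists (mul h h'); [exact: HM | rewrite (mulA TG)].
- exists (mul (inv h) h'); first exact: HM (HV _ Hh) Hh'.
  by rewrite -(mulA TG) (mulVKg TG).
Qed.

Lemma lcoset_eq_mulV (H : set G) x u : H one -> lcoset x H = lcoset u H ->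
  H (mul (inv x) u).
Proof.
move=> H1 e; have : lcoset x H u by rewrite e; exact: lcoset_refl.
by case=> h Hh <-; rewrite (mulKg TG).
Qed.

Lemma lcoset_open (H : set G) x : open H -> open (lcoset x H).
Proof.
move=> oH; rewrite openE => _ [h Hh <-].
have nH : nbhs (mul (inv x) (mul x h)) H by rewrite (mulKg TG); exact: open_nbhs_nbhs.
apply: filterS (lmul_near TG nH) => z Hz.
by exists (mul (inv x) z) => //; rewrite (mulVKg TG).
Qed.

Lemma lcoset_image (a : G -> G) (H : set G) x :
  {morph a : y z / mul y z} -> a @` lcoset x H = lcoset (a x) (a @` H).
Proof.
move=> aM; apply/seteqP; split.
  by move=> _ [_ [h Hh <-] <-]; exists (a h); [exists h | rewrite aM].
by move=> _ [_ [h Hh <-] <-]; exists (mul x h); [exists h | rewrite aM].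
Qed.

Definition lcoset_cover (U H : set G) (s : seq G) :=
  forall u, U u -> exists2 x, x \in s & lcoset x H = lcoset u H.

Lemma index_le_size U H s : lcoset_cover U H s -> index U H <= size s.
Proof.
move=> cov; rewrite /Defs.index; set CS := [set _ | _ in _].
have [fin|inf] := pselect (finite_set CS); last first.
  by rewrite /fset_set; case: pselect => [a|_]; [case: inf | rewrite cardfs0].
rewrite -(size_map (lcoset^~ H) s); apply: uniq_leq_size; first exact: fset_uniq.
move=> C; rewrite in_fset_set // in_setE => -[u Uu <-].
have [x xs <-] := cov u Uu; exact: map_f.
Qed.

(* The cosets of the open subgroup [U ∩ W] form an open cover of the compact
   [U], so there are finitely many and a choice of representatives is exact. *)
Lemma index_cover U W : cos U -> cos W ->
  exists s, size s = index U (U `&` W) /\ lcoset_cover U (U `&` W) s.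
Proof.
move=> [sU cU oU] [sW _ oW]; set H := U `&` W.
have sH : subgroup H by exact: subgroupI.
have H1 : H one by case: sH.
set CS := [set lcoset x H | x in U].
have finCS : finite_set CS.
  have [D _ UD] : finite_subset_cover U (lcoset^~ H) U.
    apply: compact_finite_subcover cU _ => x _.
    by apply: open_nbhs_nbhs; split; [exact: lcoset_open (openI oU oW) | exact: lcoset_refl].
  apply: sub_finite_set (finite_image _ (finite_fset D)) => _ [u /UD[d Dd ud] <-].
  by exists d => //; rewrite (lcoset_eq sH ud).
pose rep (C : set G) : G :=
  if pselect (exists x, C = lcoset x H) is left e then projT1 (cid e) else one.
have repP x : lcoset (rep (lcoset x H)) H = lcoset x H.
  rewrite /rep; case: pselect => [e|]; last by case; exists x.
  by case: (cid e) => y /= <-.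
exists (map rep (fset_set CS)); split; first by rewrite size_map.
move=> u Uu; exists (rep (lcoset u H)); last exact: repP.
by apply: map_f; rewrite in_fset_set // in_setE; exists u.
Qed.

Lemma index_gt0 U W : cos U -> cos W -> 0 < index U (U `&` W).
Proof.
move=> cU cW; have [s [<- cov]] := index_cover cU cW.
have U1 : U one by case: cU => -[].
by have [x + _] := cov one U1; case: s {cov}.
Qed.

(* Each coset of [U ∩ W] in [U] is [x y (U ∩ W)] with [x] running through
   representatives of [U / (U ∩ V)] and [y] through chosen points of
   [(U ∩ V) ∩ z (V ∩ W)] for representatives [z] of [V / (V ∩ W)]. *)
Lemma index_submul U V W : cos U -> cos V -> cos W ->
  index U (U `&` W) <= index U (U `&` V) * index V (V `&` W).
Proof.
move=> cU cV cW.
have [s [<- covs]] := index_cover cU cV; have [t [<- covt]] := index_cover cV cW.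
have [[U1 UM UV] _ _] := cU.
have sVW : subgroup (V `&` W) by apply: subgroupI; [case: cV | case: cW].
have VW1 : (V `&` W) one by case: sVW.
pose pick (z : G) : G :=
  if pselect (exists y, (U `&` V) y /\ lcoset z (V `&` W) y) is left e
  then projT1 (cid e) else z.
have pickP z : (exists y, (U `&` V) y /\ lcoset z (V `&` W) y) ->
    (U `&` V) (pick z) /\ lcoset z (V `&` W) (pick z).
  by move=> ex; rewrite /pick; case: pselect => [e|//]; exact: projT2 (cid e).
rewrite -(size_allpairs (fun x z => mul x (pick z))); apply: index_le_size => u Uu.
have [x xs ex] := covs u Uu.
have UV1 : (U `&` V) one by split => //; case: cV => -[].
have [Uxu Vxu] : (U `&` V) (mul (inv x) u) by exact: lcoset_eq_mulV UV1 ex.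
have [z zt ez] := covt _ Vxu.
have zxu : lcoset z (V `&` W) (mul (inv x) u) by rewrite ez; exact: lcoset_refl.
have [[Uy _] zy] := pickP z (ex_intro _ _ (conj (conj Uxu Vxu) zxu)).
have VWyxu : (V `&` W) (mul (inv (pick z)) (mul (inv x) u)).
  by apply: lcoset_eq_mulV => //; rewrite (lcoset_eq sVW zy) ez.
exists (mul x (pick z)); first exact: (allpairs_f (fun x z => mul x (pick z)) xs zt).
apply: esym; apply: lcoset_eq; first by apply: subgroupI; [case: cU | case: cW].
exists (mul (inv (pick z)) (mul (inv x) u)).
  by split; [exact: UM (UV _ Uy) Uxu | case: VWyxu].
by rewrite -(mulA TG) (mulVKg TG) (mulVKg TG).
Qed.

Lemma inj_imageI (a : G -> G) (A B : set G) : injective a ->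
  a @` (A `&` B) = a @` A `&` a @` B.
Proof.
move=> ia; apply/seteqP; split; first by move=> _ [x [Ax Bx] <-]; split; exists x.
by move=> _ [[x Ax <-] [y By /ia exy]]; exists x => //; split => //; rewrite -exy.
Qed.

Lemma index_image_le a U W : {morph a : x y / mul x y} -> injective a ->
  cos U -> cos W -> index (a @` U) (a @` U `&` a @` W) <= index U (U `&` W).
Proof.
move=> aM ia cU cW; have [s [<- cov]] := index_cover cU cW.
rewrite -inj_imageI // -(size_map a s); apply: index_le_size => _ [u Uu <-].
have [x xs e] := cov u Uu; exists (a x); first exact: map_f.
by rewrite -!lcoset_image // e.
Qed.

Lemma index_prod_submul U V W : cos U -> cos V -> cos W ->
  index U (U `&` W) * index W (W `&` U) <=
  (index U (U `&` V) * index V (V `&` U)) * (index V (V `&` W) * index W (W `&` V)).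
Proof.
move=> cU cV cW.
apply: leq_trans (leq_mul (index_submul cU cV cW) (index_submul cW cV cU)) _.
by rewrite mulnACA [index V _ * _]mulnC -mulnACA [index W _ * _]mulnC.
Qed.

Local Open Scope R_scope.
Local Notation dist := (Defs.dist mul).

Lemma ln_le x y : 0 < x -> x <= y -> ln x <= ln y.
Proof.
move=> x0 /Rle_lt_or_eq_dec [xy|->]; last exact: Rle_refl.
exact/Rlt_le/ln_increasing.
Qed.

Lemma dist_sym U W : dist U W = dist W U.
Proof. by rewrite /Defs.dist mulnC. Qed.

Lemma INR_index_gt0 U V W X : cos U -> cos V -> cos W -> cos X ->
  0 < INR (index U (U `&` V) * index W (W `&` X)).
Proof. by move=> *; apply/lt_0_INR/ltP; rewrite muln_gt0 !index_gt0. Qed.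

Lemma dist_triangle U V W : cos U -> cos V -> cos W -> dist U W <= dist U V + dist V W.
Proof.
move=> cU cV cW; rewrite /Defs.dist -ln_mult; [ | exact: INR_index_gt0 ..].
apply: ln_le; first exact: INR_index_gt0.
by rewrite -mult_INR; apply/le_INR/leP; exact: index_prod_submul.
Qed.

Lemma dist_image_le a U W : {morph a : x y / mul x y} -> injective a ->
  cos U -> cos W -> cos (a @` U) -> cos (a @` W) -> dist (a @` U) (a @` W) <= dist U W.
Proof.
move=> aM ia cU cW caU caW; apply: ln_le; first exact: INR_index_gt0.
by apply/le_INR/leP; apply: leq_mul; exact: index_image_le.
Qed.

End CosetIndex.

Lemma inverse_fun_unique {T : topologicalType} (f g g' : T -> T) :
  inverse_fun f g -> inverse_fun f g' -> g = g'.
Proof. by move=> [gf fg] [g'f fg']; apply: funext => x; rewrite -[in LHS](fg' x) gf. Qed.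

Lemma inverse_fun_sym {T : topologicalType} (f g : T -> T) : inverse_fun f g -> inverse_fun g f.
Proof. by case. Qed.

Lemma inverse_fun_comp {T : topologicalType} (f g f' g' : T -> T) :
  inverse_fun f f' -> inverse_fun g g' -> inverse_fun (f \o g) (g' \o f').
Proof. by move=> [f'f ff'] [g'g gg']; split => x /=; rewrite ?f'f ?g'g ?gg' ?ff'. Qed.

Section Automorphisms.
Variable G : topologicalType.
Variables (mul : G -> G -> G) (inv : G -> G) (one : G).
Hypothesis TG : is_topological_group mul inv one.

Local Notation cos := (compact_open_subgroup mul inv one).
Local Notation Aut := (is_automorphism mul).
Local Notation dist := (Defs.dist mul).
Local Open Scope R_scope.

Lemma aut_one f : Aut f -> f one = one.
Proof.
case=> fM _ _; have e : mul (f one) (f one) = f one by rewrite -fM (mulg1 TG).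
by rewrite -(mulKg TG (f one) (f one)) e (mulVg TG).
Qed.

Lemma aut_inv f x : Aut f -> f (inv x) = inv (f x).
Proof.
move=> fA; have [fM _ _] := fA.
have e : mul (f x) (f (inv x)) = one by rewrite -fM (mulgV TG) aut_one.
by rewrite -(mulKg TG (f x) (f (inv x))) e (mulg1 TG).
Qed.

Lemma aut_inj f : Aut f -> injective f.
Proof. by case=> _ _ [g [[gf _] _]] x y e; rewrite -(gf x) e gf. Qed.

Lemma aut_inverse f g : Aut f -> inverse_fun f g -> Aut g.
Proof.
move=> [fM fC [g' [fg' g'C]]] fg; have eg := inverse_fun_unique fg fg'; subst g'.
case: (fg) => gf fgx; split => //.
- by move=> x y; rewrite -{1}(fgx x) -{1}(fgx y) -fM gf.
- by exists f; split => //; exact: inverse_fun_sym.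
Qed.

Lemma aut_comp f g : Aut f -> Aut g -> Aut (f \o g).
Proof.
move=> [fM fC [f' [ff' f'C]]] [gM gC [g' [gg' g'C]]]; split.
- by move=> x y /=; rewrite gM fM.
- by move=> x; apply: continuous_comp; [exact: gC | exact: fC].
- exists (g' \o f'); split; first exact: inverse_fun_comp.
  by move=> x; apply: continuous_comp; [exact: f'C | exact: g'C].
Qed.

Lemma aut_cos f V : Aut f -> cos V -> cos (f @` V).
Proof.
move=> fA [[V1 VM VV] cV oV]; have [fM fC [g [[gf fg] gC]]] := fA; split.
- split.
  + by exists one => //; exact: aut_one.
  + by move=> _ _ [x Vx <-] [y Vy <-]; exists (mul x y); [exact: VM | rewrite fM].
  + by move=> _ [x Vx <-]; exists (inv x); [exact: VV | exact: aut_inv].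
- by apply: continuous_compact => //; exact: continuous_subspaceT.
- have -> : f @` V = g @^-1` V.
    apply/seteqP; split => [_ [x Vx <-]|y Vgy]; first by rewrite /= gf.
    by exists (g y).
  by move/continuousP: gC; apply.
Qed.

Lemma dist_aut_le a U W : Aut a -> cos U -> cos W -> dist (a @` U) (a @` W) <= dist U W.
Proof.
move=> aA cU cW; have [aM _ _] := aA.
exact: (dist_image_le TG aM (aut_inj aA) cU cW (aut_cos aA cU) (aut_cos aA cW)).
Qed.

Lemma dist_comp_le a b V : Aut a -> Aut b -> cos V ->
  dist ((a \o b) @` V) V <= dist (b @` V) V + dist (a @` V) V.
Proof.
move=> aA bA cV; rewrite -image_comp.
have := dist_triangle TG (aut_cos aA (aut_cos bA cV)) (aut_cos aA cV) cV.
have := dist_aut_le aA (aut_cos bA cV) cV; lra.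
Qed.

Lemma dist_inverse_le a a' V : Aut a -> inverse_fun a a' -> cos V ->
  dist (a' @` V) V <= dist (a @` V) V.
Proof.
move=> aA [a'a aa'] cV; have a'A := aut_inverse aA (conj a'a aa').
have e : a' @` (a @` V) = V.
  by rewrite image_comp (_ : a' \o a = id) ?image_id //; apply: funext.
by rewrite -{2}e [X in _ <= X]dist_sym; exact: (dist_aut_le a'A cV (aut_cos aA cV)).
Qed.

Definition orbit_bounded (B : set (G -> G)) (V : set G) :=
  exists M, forall b, B b -> dist (b @` V) V <= M.

Lemma bounded_setP B V : (forall b, B b -> Aut b) -> cos V ->
  bounded_set mul inv one B <-> orbit_bounded B V.
Proof.
move=> BA cV; split => [[V0 [cV0 [M0 BM0]]]|[M BM]]; last first.
  exists V; split => //; exists (M + M) => b c Bb Bc.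
  have := dist_triangle TG (aut_cos (BA b Bb) cV) cV (aut_cos (BA c Bc) cV).
  have := BM b Bb; have := BM c Bc; rewrite [dist V _]dist_sym; lra.
have [[c Bc]|noB] := pselect (exists c, B c); last first.
  by exists 0 => b Bb; case: noB; exists b.
exists (dist V V0 + M0 + dist (c @` V0) V) => b Bb.
have cA := BA c Bc; have bA := BA b Bb.
have := dist_triangle TG (aut_cos bA cV) (aut_cos bA cV0) cV.
have := dist_triangle TG (aut_cos bA cV0) (aut_cos cA cV0) cV.
have := dist_aut_le bA cV cV0; have := BM0 b c Bb Bc; lra.
Qed.

Lemma bounded_set_sub (B1 B2 : set (G -> G)) : B1 `<=` B2 ->
  bounded_set mul inv one B2 -> bounded_set mul inv one B1.
Proof.
by move=> B12 [V [cV [M BM]]]; exists V; split => //; exists M => b c /B12 + /B12; exact: BM.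
Qed.

Lemma conj_class_sub (K1 K2 : set (G -> G)) phi : K1 `<=` K2 ->
  conj_class K1 phi `<=` conj_class K2 phi.
Proof. by move=> K12 f [psi [psi' [/K12 K2psi ipsi ->]]]; exists psi, psi'. Qed.

Lemma FCd_sub (K : set (G -> G)) : FCd mul inv one K `<=` K.
Proof. by move=> phi []. Qed.

Lemma FCd_idem (K : set (G -> G)) : FCd mul inv one (FCd mul inv one K) = FCd mul inv one K.
Proof.
apply/seteqP; split => [phi [] //|phi [Kphi bphi]]; split; first by split.
exact: bounded_set_sub (conj_class_sub (@FCd_sub K)) bphi.
Qed.

Section ConjugacyClasses.
Variable H : set (G -> G).
Hypothesis HA : automorphism_group mul H.
Variable V : set G.
Hypothesis cV : cos V.

Local Notation N := (FCd mul inv one H).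

Lemma automorphism_group_inverse f g : H f -> inverse_fun f g -> H g.
Proof.
case: HA => _ _ _ Hinv Hf fg; have [g' Hg' fg'] := Hinv f Hf.
by rewrite (inverse_fun_unique fg fg').
Qed.

Lemma conj_class_aut phi : H phi -> forall f, conj_class H phi f -> Aut f.
Proof.
case: HA => HAut _ _ _ Hphi _ [psi [psi' [Hpsi psipsi' ->]]].
apply: aut_comp; first exact: aut_comp (HAut _ Hpsi) (HAut _ Hphi).
exact: aut_inverse (HAut _ Hpsi) psipsi'.
Qed.

Lemma conj_class_conj psi psi' f : H psi -> inverse_fun psi psi' ->
  conj_class H (psi \o f \o psi') `<=` conj_class H f.
Proof.
case: HA => _ _ Hcomp _ Hpsi psipsi' _ [chi [chi' [Hchi chichi' ->]]].
by exists (chi \o psi), (psi' \o chi'); split; [exact: Hcomp | exact: inverse_fun_comp |].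
Qed.

Lemma FCd_orbit_bounded phi : N phi -> orbit_bounded (conj_class H phi) V.
Proof. by case=> Hphi bphi; apply/(bounded_setP (conj_class_aut Hphi) cV). Qed.

Lemma FCd_id : N id.
Proof.
case: HA => _ Hid _ _; split => //; apply/(bounded_setP (conj_class_aut Hid) cV).
exists (dist V V) => _ [psi [psi' [_ [_ psipsi'] ->]]].
by rewrite (_ : psi \o id \o psi' = id) ?image_id; [exact: Rle_refl | apply: funext].
Qed.

Lemma FCd_comp f g : N f -> N g -> N (f \o g).
Proof.
move=> Nf Ng; have [Hf _] := Nf; have [Hg _] := Ng.
have [Mf bf] := FCd_orbit_bounded Nf; have [Mg bg] := FCd_orbit_bounded Ng.
have Hfg : H (f \o g) by case: HA => _ _ Hcomp _; exact: Hcomp.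
split => //; apply/(bounded_setP (conj_class_aut Hfg) cV); exists (Mg + Mf).
move=> _ [psi [psi' [Hpsi [psi'psi psipsi'] ->]]].
have Cf : conj_class H f (psi \o f \o psi') by exists psi, psi'.
have Cg : conj_class H g (psi \o g \o psi') by exists psi, psi'.
rewrite (_ : psi \o (f \o g) \o psi' = (psi \o f \o psi') \o (psi \o g \o psi')); last first.
  by apply: funext => x /=; rewrite psi'psi.
have := dist_comp_le (conj_class_aut Hf Cf) (conj_class_aut Hg Cg) cV.
have := bf _ Cf; have := bg _ Cg; lra.
Qed.

Lemma FCd_inverse f g : N f -> inverse_fun f g -> N g.
Proof.
move=> Nf fg; have [Hf _] := Nf; have [Mf bf] := FCd_orbit_bounded Nf.
have Hg := automorphism_group_inverse Hf fg.
split => //; apply/(bounded_setP (conj_class_aut Hg) cV); exists Mf.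
move=> _ [psi [psi' [Hpsi psipsi' ->]]].
have Cf : conj_class H f (psi \o f \o psi') by exists psi, psi'.
have bfg : inverse_fun (psi \o f \o psi') (psi \o g \o psi').
  by case: fg psipsi' => [gf fg'] [psi'psi psipsi'x]; split => x /=;
    rewrite psi'psi ?gf ?fg' psipsi'x.
have := dist_inverse_le (conj_class_aut Hf Cf) bfg cV; have := bf _ Cf; lra.
Qed.

Lemma FCd_conj psi psi' f : H psi -> inverse_fun psi psi' -> N f -> N (psi \o f \o psi').
Proof.
case: (HA) => _ _ Hcomp _ Hpsi psipsi' [Hf bf]; split.
  by apply: (Hcomp); [exact: Hcomp | exact: automorphism_group_inverse psipsi'].
exact: bounded_set_sub (conj_class_conj Hpsi psipsi') bf.
Qed.

End ConjugacyClasses.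
End Automorphisms.

Theorem proposition1 (G : topologicalType) (mul : G -> G -> G) (inv : G -> G) (one : G)
  (H : set (G -> G)) :
  is_tdlc_group mul inv one ->
  automorphism_group mul H ->
  normal_subgroup (FCd mul inv one H) H /\
  FCd mul inv one (FCd mul inv one H) = FCd mul inv one H.
Proof.
move=> [TG TD LC] HA.
have [V cV] := compact_open_subgroup_exists TG TD LC.
split; last exact: FCd_idem.
split; [exact: FCd_sub | exact: (FCd_id TG HA cV) | exact: (FCd_comp TG HA cV)
       | exact: (FCd_inverse TG HA cV) | exact: (FCd_conj HA)].
Qed.
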